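(* Let $N=2m+1$ be an odd integer with $N\ge3$. There exist $\varphi,\psi\in\mathbb{C}^N$ such that there is no $c\in\mathbb{C}$ with $|c|=1$ and $\psi=c\varphi$, while for all $k=0,\ldots,2N-3$, $$\Big|P_\varphi\Big(\tfrac{k}{2N-2}\Big)\Big|=\Big|P_\psi\Big(\tfrac{k}{2N-2}\Big)\Big|\quad\text{and}\quad\Big|P_\varphi'\Big(\tfrac{k}{2N-2}\Big)\Big|=\Big|P_\psi'\Big(\tfrac{k}{2N-2}\Big)\Big|.$$
   Context: For $\psi=(\psi_0,\ldots,\psi_{N-1})\in\mathbb{C}^N$, $P_\psi(x)=\sum_{j=0}^{N-1}\psi_je^{2i\pi jx}$ for $x\in\mathbb{R}$, and $P_\psi'$ denotes its derivative in $x$. *)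

From Stdlib Require Import Reals.
From Coquelicot Require Import Coquelicot.
Open Scope R_scope.

Definition expi (t : R) : C := (cos t, sin t).

(* P_psi(x) = sum_{j=0}^{N-1} psi_j e^{2 i pi j x}; a vector of C^N is
   represented by psi : nat -> C, only indices j < N being relevant. *)
Definition Ppoly (N : nat) (psi : nat -> C) (x : R) : C :=
  sum_n (fun j => Cmult (psi j) (expi (2 * PI * INR j * x))) (N - 1).

From Stdlib Require Import Reals Lra Lia.
From Coquelicot Require Import Coquelicot.
Open Scope R_scope.

(* Vectors supported on the indices 0, m, 2m give P(x) = a + b z + c z^2 with
   z = e^{2 i pi m x}, and at the sample points x = k/(4m) = k/(2N-2) the phase z
   is a fourth root of unity.  For phi = (i sqrt 3, 4, 1) and psi = (2 i sqrt 3, 2, 2)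
   the moduli of P agree at z = 1, i, -1, -i, while |P'| = 2 pi m |b + 2 c z| agrees
   on the whole unit circle since |u + v z| = |v + u z| for real u, v and |z| = 1.
   The last coefficients 1 and 2 rule out psi = c phi with |c| = 1. *)

Lemma sum_n_kronecker {G : AbelianMonoid} (F : nat -> G) (d n : nat) :
  sum_n (fun j => if (j =? d)%nat then F j else zero) n
  = if (d <=? n)%nat then F d else zero.
Proof.
  induction n as [|n IH].
  - rewrite sum_O; destruct d; reflexivity.
  - rewrite sum_Sn, IH.
    destruct (Nat.eqb_spec (S n) d) as [<- | Hd].
    + replace (S n <=? n)%nat with false by (symmetry; apply Nat.leb_gt; lia).
      rewrite Nat.leb_refl; apply plus_zero_l.
    + rewrite plus_zero_r.
      destruct (Nat.leb_spec d n), (Nat.leb_spec d (S n)); solve [reflexivity | lia].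
Qed.

Section Trinomials.

Local Open Scope C_scope.

Lemma expi_add (s t : R) : expi (s + t) = expi s * expi t.
Proof.
  unfold expi, Cmult; simpl.
  rewrite cos_plus, sin_plus; f_equal; ring.
Qed.

Lemma expi_quarter_turns (k : nat) :
  let z := expi (PI * INR k / 2) in z = 1 \/ z = Ci \/ z = -1 \/ z = - Ci.
Proof.
  assert (rotate : forall z : C, z * Ci = ((- snd z)%R, fst z)).
  { intros [x y]; apply injective_projections; simpl; ring. }
  induction k as [|k IH]; cbv zeta in *.
  - left; unfold expi; rewrite Rmult_0_r, Rdiv_0_l, cos_0, sin_0; reflexivity.
  - replace (PI * INR (S k) / 2)%R with (PI * INR k / 2 + PI / 2)%R
      by (rewrite S_INR; field).
    rewrite expi_add.
    replace (expi (PI / 2)) with Ci by (unfold expi; rewrite cos_PI2, sin_PI2; reflexivity).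
    rewrite rotate.
    destruct IH as [-> | [-> | [-> | ->]]]; simpl;
      [right; left | right; right; left | right; right; right | left];
      apply injective_projections; simpl; ring.
Qed.

Definition trinomial (m : nat) (a b c : C) (j : nat) : C :=
  if (j =? 0)%nat then a
  else if (j =? m)%nat then b
  else if (j =? 2 * m)%nat then c
  else 0.

Lemma Ppoly_trinomial (m : nat) (a b c : C) (x : R) : (0 < m)%nat ->
  Ppoly (2 * m + 1) (trinomial m a b c) x
  = a + b * expi (2 * PI * INR m * x)
      + c * (expi (2 * PI * INR m * x) * expi (2 * PI * INR m * x)).
Proof.
  intros Hm; unfold Ppoly.
  set (e := fun j => expi (2 * PI * INR j * x)).
  replace (2 * m + 1 - 1)%nat with (2 * m)%nat by lia.
  rewrite sum_n_ext with (b := fun j =>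
    plus (plus (if (j =? 0)%nat then a * e j else zero)
               (if (j =? m)%nat then b * e j else zero))
         (if (j =? 2 * m)%nat then c * e j else zero)).
  2:{ intros j; unfold trinomial, e.
      destruct (Nat.eqb_spec j 0), (Nat.eqb_spec j m), (Nat.eqb_spec j (2 * m));
        try lia; simpl; change plus with Cplus; change zero with (RtoC 0); ring. }
  rewrite !sum_n_plus, !sum_n_kronecker.
  replace (0 <=? 2 * m)%nat with true by (symmetry; apply Nat.leb_le; lia).
  replace (m <=? 2 * m)%nat with true by (symmetry; apply Nat.leb_le; lia).
  rewrite Nat.leb_refl; unfold e.
  replace (2 * PI * INR (2 * m) * x)%R
    with (2 * PI * INR m * x + 2 * PI * INR m * x)%R by (rewrite mult_INR; simpl; ring).
  rewrite expi_add.
  replace (expi (2 * PI * INR 0 * x)) with (RtoC 1)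
    by (unfold expi; simpl; rewrite Rmult_0_r, Rmult_0_l, cos_0, sin_0; reflexivity).
  change plus with Cplus; ring.
Qed.

Lemma is_derive_C_components (f g : R -> R) (x df dg : R) :
  is_derive f x df -> is_derive g x dg ->
  is_derive (fun t => ((f t, g t) : C)) x ((df, dg) : C).
Proof.
  intros Hf Hg.
  set (V := prod_NormedModule R_AbsRing R_NormedModule R_NormedModule).
  assert (Hsum : is_derive (fun t => @plus V (scal (f t) ((1, 0) : C)) (scal (g t) ((0, 1) : C)))
                   x (@plus V (scal df ((1, 0) : C)) (scal dg ((0, 1) : C)))).
  { apply (@is_derive_plus R_AbsRing V); apply (@is_derive_scal_l R_AbsRing V); assumption. }
  eapply is_derive_ext; [| replace ((df, dg) : C) with
      (@plus V (scal df ((1, 0) : C)) (scal dg ((0, 1) : C))); [exact Hsum |]].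
  all: try intros t; apply injective_projections; simpl;
    unfold prod_plus, prod_scal, plus, scal, mult; simpl; unfold mult; simpl; ring.
Qed.

Lemma is_derive_Ppoly_trinomial (m : nat) (a b c : C) (x : R) : (0 < m)%nat ->
  is_derive (Ppoly (2 * m + 1) (trinomial m a b c)) x
    ((0, 2 * PI * INR m)%R * expi (2 * PI * INR m * x)
     * (b + 2 * c * expi (2 * PI * INR m * x))).
Proof.
  intros Hm.
  set (F := fun t => a + b * expi (2 * PI * INR m * t)
      + c * (expi (2 * PI * INR m * t) * expi (2 * PI * INR m * t))).
  apply is_derive_ext with (f := fun t => ((fst (F t), snd (F t)) : C)).
  { intros t; rewrite Ppoly_trinomial by exact Hm; exact (eq_sym (surjective_pairing (F t))). }
  destruct a as [a1 a2], b as [b1 b2], c as [c1 c2].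
  unfold F, expi, Cmult, Cplus; simpl.
  apply is_derive_C_components; auto_derive; trivial; ring.
Qed.

Lemma Cmod_expi (t : R) : Cmod (expi t) = 1%R.
Proof.
  unfold Cmod, expi; cbn [fst snd].
  replace (cos t ^ 2 + sin t ^ 2)%R with 1%R
    by (pose proof (sin2_cos2 t) as H; unfold Rsqr in H; nra).
  apply sqrt_1.
Qed.

Lemma Cmod_swap_real_coefficients (a b : R) (z : C) :
  Cmod z = 1%R -> Cmod (a + b * z) = Cmod (b + a * z).
Proof.
  destruct z as [x y]; unfold Cmod; cbn [fst snd]; intros Hz.
  assert (Hxy : (x ^ 2 + y ^ 2 = 1)%R).
  { rewrite <- (sqrt_sqrt (x ^ 2 + y ^ 2)) by (apply Rplus_le_le_0_compat; apply pow2_ge_0); rewrite Hz; ring. }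
  f_equal; cbn; nra.
Qed.

End Trinomials.

Definition witness_phi (m : nat) : nat -> C := trinomial m (0, sqrt 3) 4 1.
Definition witness_psi (m : nat) : nat -> C := trinomial m (0, 2 * sqrt 3) 2 2.

Lemma witnesses_not_proportional (m : nat) : (0 < m)%nat ->
  ~ (exists c : C, Cmod c = 1 /\
       forall j : nat, (j < 2 * m + 1)%nat -> witness_psi m j = Cmult c (witness_phi m j)).
Proof.
  intros Hm [c [Hc Hprop]].
  specialize (Hprop (2 * m)%nat ltac:(lia)).
  unfold witness_phi, witness_psi, trinomial in Hprop.
  destruct (Nat.eqb_spec (2 * m) 0), (Nat.eqb_spec (2 * m) m); try lia.
  rewrite Nat.eqb_refl, Cmult_1_r in Hprop.
  rewrite <- Hprop in Hc.
  rewrite Cmod_R, Rabs_pos_eq in Hc; lra.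
Qed.

Lemma quarter_sample_phase (m k : nat) : (0 < m)%nat ->
  2 * PI * INR m * (INR k / INR (4 * m)) = PI * INR k / 2.
Proof.
  intros Hm; rewrite mult_INR; simpl.
  field; apply not_0_INR; lia.
Qed.

Lemma witnesses_Cmod_at_samples (m k : nat) : (0 < m)%nat ->
  let x := INR k / INR (4 * m) in
  Cmod (Ppoly (2 * m + 1) (witness_phi m) x) = Cmod (Ppoly (2 * m + 1) (witness_psi m) x).
Proof.
  intros Hm x; unfold x, witness_phi, witness_psi.
  rewrite !Ppoly_trinomial, quarter_sample_phase by exact Hm.
  assert (H3 : sqrt 3 * sqrt 3 = 3) by (apply sqrt_sqrt; lra).
  destruct (expi_quarter_turns k) as [-> | [-> | [-> | ->]]];
    unfold Cmod; cbn; f_equal; nra.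
Qed.

Lemma witnesses_Cmod_derive (m : nat) (x : R) : (0 < m)%nat ->
  exists dphi dpsi : C,
    is_derive (Ppoly (2 * m + 1) (witness_phi m)) x dphi /\
    is_derive (Ppoly (2 * m + 1) (witness_psi m)) x dpsi /\
    Cmod dphi = Cmod dpsi.
Proof.
  intros Hm; eexists _, _.
  split; [apply is_derive_Ppoly_trinomial, Hm | split; [apply is_derive_Ppoly_trinomial, Hm |]].
  set (z := expi (2 * PI * INR m * x)).
  rewrite !Cmod_mult; f_equal.
  replace (4 + 2 * 1 * z)%C with (RtoC 4 + RtoC 2 * z)%C by ring.
  replace (2 + 2 * 2 * z)%C with (RtoC 2 + RtoC 4 * z)%C by ring.
  apply Cmod_swap_real_coefficients, Cmod_expi.
Qed.

Theorem mainTheorem11 (m : nat) (N : nat) (HN : N = (2 * m + 1)%nat) (H3 : (3 <= N)%nat) :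
  exists phi psi : nat -> C,
    ~ (exists c : C, Cmod c = 1 /\ forall j : nat, (j < N)%nat -> psi j = Cmult c (phi j)) /\
    forall k : nat, (k <= 2 * N - 3)%nat ->
      let x := INR k / INR (2 * N - 2) in
      Cmod (Ppoly N phi x) = Cmod (Ppoly N psi x) /\
      exists dphi dpsi : C,
        is_derive (Ppoly N phi) x dphi /\ is_derive (Ppoly N psi) x dpsi /\
        Cmod dphi = Cmod dpsi.
Proof.
  subst N; assert (Hm : (0 < m)%nat) by lia.
  exists (witness_phi m), (witness_psi m); split.
  - exact (witnesses_not_proportional m Hm).
  - intros k _.
    replace (2 * (2 * m + 1) - 2)%nat with (4 * m)%nat by lia.
    intros x; split.
    + exact (witnesses_Cmod_at_samples m k Hm).
    + exact (witnesses_Cmod_derive m x Hm).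
Qed.
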